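(* Let $G$ be a $4$-edge-connected graph and $u,v$ adjacent vertices of $G$ such that $v$ has at least $3$ edges to $V(G)\setminus\{u,v\}$. Let $va,vb$ be two distinct such edges with $a\ne b$, $a,b\notin\{u,v\}$, and let $G_1=G-u-v+ab$ (delete $u$ and $v$, add a new edge $ab$). If $G_1\in\mathcal{S}_3$, then $G\in\mathcal{S}_3$.
   Context: Graphs may have parallel edges but no loops. $G\in\mathcal{S}_3$ means: for every $\beta:V(G)\to\mathbb{Z}_3$ with $\sum_v\beta(v)\equiv0\pmod3$ there is a strongly-connected orientation $D$ of $G$ with $d^+_D(v)-d^-_D(v)\equiv\beta(v)\pmod3$ for all $v$. *)

(* Multigraphs: a vertex set W : {set V} and an edge set
   F : {set E} over finite types, with endpoint map ends : E -> V * V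
   (parallel edges allowed: distinct edges may have equal ends). *)
From HB Require Import structures.
From mathcomp Require Import all_boot all_order all_algebra.
Set Implicit Arguments. Unset Strict Implicit. Unset Printing Implicit Defensive.
Import GRing.Theory.

Section Graphs.
Variables (V E : finType).

Definition joins (ends : E -> V * V) (e : E) (x y : V) : bool :=
  (ends e == (x, y)) || (ends e == (y, x)).

Definition tail (ends : E -> V * V) (D : E -> bool) (e : E) : V :=
  if D e then (ends e).1 else (ends e).2.
Definition head (ends : E -> V * V) (D : E -> bool) (e : E) : V :=
  if D e then (ends e).2 else (ends e).1.

Definition darc (F : {set E}) (ends : E -> V * V) (D : E -> bool) : rel V :=
  fun x y => [exists e in F, (tail ends D e == x) && (head ends D e == y)].

Definition strongly_connected (W : {set V}) (F : {set E})
    (ends : E -> V * V) (D : E -> bool) : Prop :=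
  forall x y, x \in W -> y \in W -> connect (darc F ends D) x y.

Definition netdeg3 (F : {set E}) (ends : E -> V * V) (D : E -> bool) (x : V)
    : 'Z_3 :=
  (#|[set e in F | tail ends D e == x]|%:R - #|[set e in F | head ends D e == x]|%:R)%R.

Definition in_S3 (W : {set V}) (F : {set E}) (ends : E -> V * V) : Prop :=
  forall beta : V -> 'Z_3, (\sum_(x in W) beta x = 0)%R ->
    exists D : E -> bool, strongly_connected W F ends D /\
      forall x, x \in W -> netdeg3 F ends D x = beta x.

Definition uarc (F : {set E}) (ends : E -> V * V) : rel V :=
  fun x y => [exists e in F, joins ends e x y].

Definition connected (W : {set V}) (F : {set E}) (ends : E -> V * V) : Prop :=
  forall x y, x \in W -> y \in W -> connect (uarc F ends) x y.

Definition k_edge_connected (k : nat) (W : {set V}) (F : {set E})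
    (ends : E -> V * V) : Prop :=
  forall R : {set E}, R \subset F -> #|R| < k -> connected W (F :\: R) ends.

Definition loopless (F : {set E}) (ends : E -> V * V) : Prop :=
  forall e, e \in F -> (ends e).1 != (ends e).2.

End Graphs.

(* G_1 = G - u - v + ab : vertices V \ {u,v}; edges: Some e for edges e of G
   avoiding u and v, and a new edge None with ends (a, b). *)
Definition del2_vset (V : finType) (u v : V) : {set V} := [set: V] :\: [set u; v].
Definition del2_add_eset (V E : finType) (ends : E -> V * V) (u v : V)
    : {set option E} :=
  [set Some e | e in [set e : E | ((ends e).1 \notin [set u; v]) &&
                                   ((ends e).2 \notin [set u; v])]] :|: [set None].
Definition del2_add_ends (V E : finType) (ends : E -> V * V) (a b : V)
    (o : option E) : V * V :=
  match o with Some e => ends e | None => (a, b) end.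

From Pilot Require Import Defs.
From HB Require Import structures.
From mathcomp Require Import all_boot all_order all_algebra.
Set Implicit Arguments. Unset Strict Implicit. Unset Printing Implicit Defensive.
Import GRing.Theory.
Local Open Scope ring_scope.

(* Given beta with zero sum, G is oriented in three parts: the edges avoiding
   u and v ("interior", i.e. the edges of G1 other than ab) as in a solution
   D1 for G1; va and vb as a directed path a-v-b or b-v-a following ab in D1,
   which has the effect of ab at a and b and none at v; and the remaining
   ("spare") edges at u and v by an orientation DR fixed beforehand.  If DR
   realises beta at u and v and gives u an in-arc and an out-arc, then D1 is
   taken for the demands beta - (flow of DR), which sum to zero on G1, and
   the result is strongly connected since a reaches and is reached from every
   vertex (glue_S3).  DR prescribes a few arcs and orients the other spare
   edges arbitrarily.  As G is 4-edge-connected, u has at least four edges.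
   If u has a neighbour outside {u, v} we prescribe uv, that edge, two more
   edges at u and a third edge leaving v; otherwise all edges at u go to v and
   the cut around {u, v} has two edges at v besides va and vb.  In both cases
   a finite check in Z_3, done by computation, provides suitable signs. *)

Section Orientations.
Variables (V E : finType) (ends : E -> V * V).

Definition flow (D : E -> bool) (e : E) (z : V) : 'Z_3 :=
  (Defs.tail ends D e == z)%:R - (Defs.head ends D e == z)%:R.

Lemma card_Z3 (F : {set E}) (P : pred E) :
  #|[set e in F | P e]|%:R = \sum_(e in F) (P e)%:R :> 'Z_3.
Proof.
rewrite -sum1_card natr_sum big_mkcond [RHS]big_mkcond /=.
by apply: eq_bigr => e _; rewrite inE; case: (e \in F); case: (P e).
Qed.

Lemma netdeg3E (F : {set E}) (D : E -> bool) (z : V) :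
  netdeg3 F ends D z = \sum_(e in F) flow D e z.
Proof. by rewrite /netdeg3 !card_Z3 -sumrB. Qed.

Lemma flow_ext (D D' : E -> bool) (e : E) (z : V) :
  D e = D' e -> flow D e z = flow D' e z.
Proof. by rewrite /flow /Defs.tail /Defs.head => ->. Qed.

(* Handshake for a single edge: it adds 1 at its tail and -1 at its head. *)
Lemma sum_flow (D : E -> bool) (e : E) : \sum_z flow D e z = 0.
Proof.
have one x : \sum_z ((x == z)%:R : 'Z_3) = 1.
  by rewrite (bigD1 x) //= eqxx big1 ?addr0 // => z; rewrite eq_sym => /negbTE->.
by rewrite sumrB !one subrr.
Qed.

Lemma flow_off (D : E -> bool) (e : E) (z : V) :
  (ends e).1 != z -> (ends e).2 != z -> flow D e z = 0.
Proof.
by rewrite /flow /Defs.tail /Defs.head => /negbTE h1 /negbTE h2; case: (D e); rewrite h1 h2 subrr.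
Qed.

Lemma from_tail_head (D : E -> bool) (e : E) (x y : V) :
  joins ends e x y -> x != y -> D e = ((ends e).1 == x) ->
  Defs.tail ends D e = x /\ Defs.head ends D e = y.
Proof.
rewrite /Defs.tail /Defs.head => /orP[]/eqP-> /= nxy ->; first by rewrite eqxx.
by rewrite eq_sym (negbTE nxy).
Qed.

Definition arc_flow (x y z : V) : 'Z_3 := (x == z)%:R - (y == z)%:R.

Lemma arc_of_edge (D : E -> bool) (e : E) :
  darc [set: E] ends D (Defs.tail ends D e) (Defs.head ends D e).
Proof. by apply/existsP; exists e; rewrite in_setT !eqxx. Qed.

Lemma tail_neq_head (D : E -> bool) (e : E) :
  loopless [set: E] ends -> Defs.tail ends D e != Defs.head ends D e.
Proof.
by move/(_ e (in_setT e)); rewrite /Defs.tail /Defs.head; case: (D e); rewrite // eq_sym.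
Qed.

Lemma joins_sym (e : E) (x y : V) : joins ends e x y = joins ends e y x.
Proof. by rewrite /joins orbC. Qed.

Lemma joins_neq (e f : E) (x y p q : V) :
  joins ends e x y -> joins ends f p q -> x != p -> x != q -> e != f.
Proof.
rewrite /joins => J Jf nxp nxq; apply/eqP => Eef; subst f.
move: J Jf nxp nxq; case: (ends e) => p' q'.
by case/orP=> /eqP[? ?] /orP[]/eqP[? ?]; subst; rewrite eqxx.
Qed.

Definition cutset (S : {set V}) : {set E} :=
  [set e | ((ends e).1 \in S) != ((ends e).2 \in S)].

Lemma cutsetP (S : {set V}) (e : E) :
  e \in cutset S -> exists x y, [/\ joins ends e x y, x \in S & y \notin S].
Proof.
rewrite inE /joins; case: (ends e) => [p q] /=.
case Hp: (p \in S); case Hq: (q \in S) => //= _.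
  by exists p, q; rewrite eqxx Hp Hq.
by exists q, p; rewrite eqxx orbT Hp Hq.
Qed.

Lemma cutset1P (x : V) (e : E) :
  e \in cutset [set x] -> exists2 y, joins ends e x y & x != y.
Proof.
by case/cutsetP=> p [q [J]]; rewrite !inE => /eqP px qx; subst p; exists q; rewrite // eq_sym.
Qed.

Lemma cutset_large (S : {set V}) (x y : V) :
  k_edge_connected 4 [set: V] [set: E] ends -> x \in S -> y \notin S ->
  (3 < #|cutset S|)%N.
Proof.
move=> H4 xS yS; rewrite ltnNge; apply/negP => small.
have := H4 _ (subsetT _) small x y (in_setT _) (in_setT _).
have closedS : closed (uarc ([set: E] :\: cutset S) ends) S.
  move=> p q /existsP[e /andP[]]; rewrite !inE andbT negbK => /eqP Heq /orP[]/eqP He;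
  by rewrite He /= in Heq.
by move/(closed_connect closedS); rewrite xS (negbTE yS).
Qed.

(* A prescription is a list of arcs (e, x, y) asking to orient e from x to y;
   edges it does not mention are oriented from (ends e).1. *)
Definition directs (P : seq (E * V * V)) (e : E) : bool :=
  if [seq p <- P | p.1.1 == e] is (_, x, _) :: _ then (ends e).1 == x else true.

Definition proper_arc (p : E * V * V) : bool :=
  joins ends p.1.1 p.1.2 p.2 && (p.1.2 != p.2).

Definition prescription (P : seq (E * V * V)) : bool :=
  uniq [seq p.1.1 | p <- P] && all proper_arc P.

Lemma directs_arc (P : seq (E * V * V)) (e : E) (x y : V) :
  uniq [seq p.1.1 | p <- P] -> (e, x, y) \in P -> directs P e = ((ends e).1 == x).
Proof.
rewrite /directs; elim: P => //= [[[e' x'] y']] P IH /andP[e'P UP].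
rewrite inE => /orP[/eqP[-> -> _]|exyP]; first by rewrite eqxx.
have eP : e \in [seq p.1.1 | p <- P] by apply/mapP; exists (e, x, y).
have /negbTE-> : e' != e by apply: contraNneq e'P => ->.
exact: IH.
Qed.

Lemma directs_off (P : seq (E * V * V)) (e : E) :
  e \notin [seq p.1.1 | p <- P] -> directs P e = true.
Proof.
rewrite /directs; elim: P => //= p P IH.
by rewrite inE negb_or eq_sym => /andP[/negbTE-> /IH].
Qed.
Lemma directs_tail_head (P : seq (E * V * V)) (p : E * V * V) :
  prescription P -> p \in P ->
  Defs.tail ends (directs P) p.1.1 = p.1.2 /\ Defs.head ends (directs P) p.1.1 = p.2.
Proof.
case/andP=> UP /allP properP pP; have /andP[J nxy] := properP p pP.
apply: from_tail_head J nxy _; apply: (directs_arc (y := p.2) UP).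
by case: p pP => [[]].
Qed.

Lemma sum_flow_directs (Q : pred E) (P : seq (E * V * V)) (z : V) :
  prescription P -> all Q [seq p.1.1 | p <- P] ->
  \sum_(e | Q e) flow (directs P) e z =
  \sum_(e | Q e && (e \notin [seq p.1.1 | p <- P])) flow (fun _ => true) e z
  + \sum_(p <- P) arc_flow p.1.2 p.2 z.
Proof.
move=> presP /allP QP; rewrite (bigID (mem [seq p.1.1 | p <- P])) /= addrC.
congr (_ + _); first by apply: eq_bigr => e /andP[_ eP]; apply: flow_ext; exact: directs_off.
have UP : uniq [seq p.1.1 | p <- P] by case/andP: presP.
rewrite (eq_bigl (mem [seq p.1.1 | p <- P])); last by move=> e; apply/andb_idl/QP.
rewrite -big_uniq // big_map.
apply: eq_big_seq => p pP; rewrite /flow.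
by have [-> ->] := directs_tail_head presP pP.
Qed.

Lemma directs_has_tail (Q : pred E) (P : seq (E * V * V)) (x : V) :
  prescription P -> all Q [seq p.1.1 | p <- P] -> has (fun p => p.1.2 == x) P ->
  exists2 e, Q e & Defs.tail ends (directs P) e = x.
Proof.
move=> presP /allP QP /hasP[p pP /eqP px]; exists p.1.1; first by apply/QP/map_f.
by rewrite -px; case: (directs_tail_head presP pP).
Qed.

Lemma directs_has_head (Q : pred E) (P : seq (E * V * V)) (x : V) :
  prescription P -> all Q [seq p.1.1 | p <- P] -> has (fun p => p.2 == x) P ->
  exists2 e, Q e & Defs.head ends (directs P) e = x.
Proof.
move=> presP /allP QP /hasP[p pP /eqP px]; exists p.1.1; first by apply/QP/map_f.
by rewrite -px; case: (directs_tail_head presP pP).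
Qed.

(* The flow at x of an arc between x and another vertex, leaving x iff t. *)
Definition sg (t : bool) : 'Z_3 := if t then 1 else -1.

Definition dir (t : bool) (e : E) (x y : V) : E * V * V :=
  (e, if t then x else y, if t then y else x).

Lemma dir_proper (t : bool) (e : E) (x y : V) :
  joins ends e x y -> x != y -> proper_arc (dir t e x y).
Proof.
move=> J nxy; case: t; rewrite /proper_arc /=; first by rewrite J nxy.
by rewrite joins_sym J eq_sym nxy.
Qed.

Lemma dir_flow (t : bool) (x y z : V) : x != y ->
  arc_flow (if t then x else y) (if t then y else x) z =
  if z == x then sg t else if z == y then - sg t else 0.
Proof.
move=> nxy; have nyx : y != x by rewrite eq_sym.
rewrite /arc_flow /sg; have [->|nzx] := eqVneq z x.
  by case: t; rewrite eqxx (negbTE nyx) ?subr0 ?sub0r.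
have [->|nzy] := eqVneq z y.
  by case: t; rewrite eqxx ?(negbTE nxy) ?(negbTE nyx) ?subr0 ?sub0r ?opprK.
by case: t; rewrite !(eq_sym _ z) (negbTE nzx) (negbTE nzy) subrr.
Qed.

Lemma dir_tail (t : bool) (x y : V) : x != y -> ((if t then x else y) == x) = t.
Proof. by case: t; rewrite ?eqxx // eq_sym => /negbTE. Qed.

Lemma dir_head (t : bool) (x y : V) : x != y -> ((if t then y else x) == x) = ~~ t.
Proof. by case: t; rewrite ?eqxx // eq_sym => /negbTE. Qed.

End Orientations.

Lemma extend_uniq (T : finType) (A : {set T}) (s0 : seq T) (n : nat) :
  uniq s0 -> (size s0 + n <= #|A|)%N ->
  exists s, [/\ uniq (s0 ++ s), size s = n & {subset s <= A}].
Proof.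
move=> U0 Hn; set B := A :\: [set x in s0].
have cardB : (n <= #|B|)%N.
  have hA := cardsID [set x in s0] A; rewrite -/B in hA.
  have hI : (#|A :&: [set x in s0]| <= size s0)%N.
    by rewrite (leq_trans (subset_leq_card (subsetIr _ _))) // cardsE card_size.
  by rewrite -(leq_add2l (size s0)) (leq_trans Hn) // -hA leq_add2r.
have inB x : x \in take n (enum B) -> (x \notin s0) && (x \in A).
  by move/mem_take; rewrite mem_enum !inE.
exists (take n (enum B)); split.
- rewrite cat_uniq U0 take_uniq ?enum_uniq // andbT /=.
  by apply/hasPn => x /inB/andP[].
- by rewrite size_takel // -cardE.
- by move=> x /inB/andP[].
Qed.

(* Quantifiers over bool and Z_3 as explicit conjunctions and disjunctions,
   so that the finite sign statements below can be decided by computation. *)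
Definition all_bool (P : bool -> bool) : bool := P true && P false.
Definition some_bool (P : bool -> bool) : bool := P true || P false.
Definition all_Z3 (P : 'Z_3 -> bool) : bool := [&& P 0, P 1 & P 2].

Lemma all_boolP (P : bool -> bool) : all_bool P -> forall t, P t.
Proof. by case/andP=> ? ? []. Qed.

Lemma some_boolP (P : bool -> bool) : some_bool P -> exists t, P t.
Proof. by case/orP=> ?; [exists true | exists false]. Qed.

Lemma all_Z3P (P : 'Z_3 -> bool) : all_Z3 P -> forall z, P z.
Proof.
case/and3P=> P0 P1 P2 [[|[|[|k]]] lt_k3] //.
- by rewrite (_ : Ordinal _ = 0) //; apply: val_inj.
- by rewrite (_ : Ordinal _ = 1) //; apply: val_inj.
- by rewrite (_ : Ordinal _ = 2) //; apply: val_inj.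
Qed.

(* Signs for case 1.  Four arcs leave (t = true) or enter u: the first goes
   to v, the second does not, and the other two go to v according to tau1,
   tau2; one more arc leaves v.  Any net degrees du, dv at u, v are realised
   with u keeping an out-arc and an in-arc. *)
Fact signs_one_outer_check :
  all_bool (fun tau1 => all_bool (fun tau2 => all_Z3 (fun du => all_Z3 (fun dv =>
   some_bool (fun s0 => some_bool (fun sh => some_bool (fun t1 =>
   some_bool (fun t2 => some_bool (fun s1 =>
   [&& sg s0 + sg sh + sg t1 + sg t2 == du,
       - sg s0 + (if tau1 then - sg t1 else 0) + (if tau2 then - sg t2 else 0) + sg s1 == dv,
       [|| s0, sh, t1 | t2] & [|| ~~ s0, ~~ sh, ~~ t1 | ~~ t2]]))))))))).
Proof. by vm_compute. Qed.

Lemma signs_one_outer (tau1 tau2 : bool) (du dv : 'Z_3) :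
  exists s0 sh t1 t2 s1,
   [/\ sg s0 + sg sh + sg t1 + sg t2 = du,
       - sg s0 + (if tau1 then - sg t1 else 0) + (if tau2 then - sg t2 else 0) + sg s1 = dv,
       [|| s0, sh, t1 | t2] & [|| ~~ s0, ~~ sh, ~~ t1 | ~~ t2]].
Proof.
move: signs_one_outer_check => /all_boolP/(_ tau1)/all_boolP/(_ tau2)/all_Z3P/(_ du)/all_Z3P/(_ dv).
case/some_boolP=> s0 /some_boolP[sh /some_boolP[t1 /some_boolP[t2 /some_boolP[s1]]]].
by case/and4P=> /eqP ? /eqP ? ? ?; exists s0, sh, t1, t2, s1.
Qed.

(* Signs for case 2: four arcs between u and v and two arcs leaving v. *)
Fact signs_no_outer_check :
  all_Z3 (fun du => all_Z3 (fun dv =>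
   some_bool (fun t0 => some_bool (fun t1 => some_bool (fun t2 => some_bool (fun t3 =>
   some_bool (fun s0 => some_bool (fun s1 =>
   [&& sg t0 + sg t1 + sg t2 + sg t3 == du,
       - sg t0 - sg t1 - sg t2 - sg t3 + sg s0 + sg s1 == dv,
       [|| t0, t1, t2 | t3] & [|| ~~ t0, ~~ t1, ~~ t2 | ~~ t3]])))))))).
Proof. by vm_compute. Qed.

Lemma signs_no_outer (du dv : 'Z_3) :
  exists t0 t1 t2 t3 s0 s1,
   [/\ sg t0 + sg t1 + sg t2 + sg t3 = du,
       - sg t0 - sg t1 - sg t2 - sg t3 + sg s0 + sg s1 = dv,
       [|| t0, t1, t2 | t3] & [|| ~~ t0, ~~ t1, ~~ t2 | ~~ t3]].
Proof.
move: signs_no_outer_check => /all_Z3P/(_ du)/all_Z3P/(_ dv).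
case/some_boolP=> t0 /some_boolP[t1 /some_boolP[t2 /some_boolP[t3]]].
case/some_boolP=> s0 /some_boolP[s1].
by case/and4P=> /eqP ? /eqP ? ? ?; exists t0, t1, t2, t3, s0, s1.
Qed.

Section Gluing.
Variables (V E : finType) (ends : E -> V * V) (u v a b : V) (ea eb : E).
Hypotheses (Huv : u != v) (Heab : ea != eb)
  (Ha : a \notin [set u; v]) (Hb : b \notin [set u; v])
  (Hea : joins ends ea v a) (Heb : joins ends eb v b).

Local Notation W1 := (del2_vset u v).
Local Notation F1 := (del2_add_eset ends u v).
Local Notation ends1 := (del2_add_ends ends a b).

Definition interior (e : E) : bool :=
  ((ends e).1 \notin [set u; v]) && ((ends e).2 \notin [set u; v]).

(* The edges at u or v other than va and vb; their orientation is ours to choose. *)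
Definition spare (e : E) : bool := [&& ~~ interior e, e != ea & e != eb].

Definition spare_flow (DR : E -> bool) (z : V) : 'Z_3 :=
  \sum_(e | spare e) flow ends DR e z.

Definition spare_rest (L : seq E) (z : V) : 'Z_3 :=
  \sum_(e | spare e && (e \notin L)) flow ends (fun _ => true) e z.

(* The orientation of G built from D1 on G1 and DR on the spare edges:
   the path a-v-b replaces the new edge ab and follows its direction. *)
Definition glue (D1 : option E -> bool) (DR : E -> bool) (e : E) : bool :=
  if interior e then D1 (Some e)
  else if e == ea then (ends e).1 == (if D1 None then a else v)
  else if e == eb then (ends e).1 == (if D1 None then v else b)
  else DR e.

Lemma av : a != v. Proof. by move: Ha; rewrite !inE negb_or => /andP[]. Qed.
Lemma bv : b != v. Proof. by move: Hb; rewrite !inE negb_or => /andP[]. Qed.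
Lemma va : v != a. Proof. by rewrite eq_sym av. Qed.
Lemma vb : v != b. Proof. by rewrite eq_sym bv. Qed.
Lemma ua : u != a. Proof. by move: Ha; rewrite !inE negb_or eq_sym => /andP[]. Qed.
Lemma ub : u != b. Proof. by move: Hb; rewrite !inE negb_or eq_sym => /andP[]. Qed.
Lemma v_in_uv : v \in [set u; v]. Proof. by rewrite !inE eqxx orbT. Qed.

Lemma not_interior (e : E) (x y : V) : joins ends e x y -> x \in [set u; v] -> ~~ interior e.
Proof. by move=> J xuv; rewrite /interior; case/orP: J => /eqP-> /=; rewrite xuv ?andbF. Qed.

Lemma spare_touching (e : E) (x y : V) :
  joins ends e x y -> x \in [set u; v] -> e != ea -> e != eb -> spare e.
Proof. by move=> J xuv nea neb; rewrite /spare (not_interior J xuv) nea neb. Qed.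

(* Every edge at u is spare: va and vb avoid u. *)
Lemma spare_at_u (e : E) (w : V) : joins ends e u w -> spare e.
Proof.
move=> J; apply: (spare_touching J); first by rewrite !inE eqxx.
- exact: joins_neq J Hea Huv ua.
- exact: joins_neq J Heb Huv ub.
Qed.


Lemma glue_ea (D1 : option E -> bool) (DR : E -> bool) :
  glue D1 DR ea = ((ends ea).1 == (if D1 None then a else v)).
Proof. by rewrite /glue (negbTE (not_interior Hea v_in_uv)) eqxx. Qed.

Lemma glue_eb (D1 : option E -> bool) (DR : E -> bool) :
  glue D1 DR eb = ((ends eb).1 == (if D1 None then v else b)).
Proof. by rewrite /glue (negbTE (not_interior Heb v_in_uv)) eq_sym (negbTE Heab) eqxx. Qed.

Lemma glue_spare (D1 : option E -> bool) (DR : E -> bool) (e : E) :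
  spare e -> glue D1 DR e = DR e.
Proof. by rewrite /glue => /and3P[/negbTE-> /negbTE-> /negbTE->]. Qed.

Lemma glue_path (D1 : option E -> bool) (DR : E -> bool) :
  let D := glue D1 DR in
  [/\ Defs.tail ends D ea = (if D1 None then a else v),
      Defs.head ends D ea = (if D1 None then v else a),
      Defs.tail ends D eb = (if D1 None then v else b) &
      Defs.head ends D eb = (if D1 None then b else v)].
Proof.
move=> D; have /= := glue_ea D1 DR; have /= := glue_eb D1 DR; rewrite -/D.
case: (D1 None) => Deb Dea.
- have [ta ha] := from_tail_head (etrans (joins_sym _ _ _ _) Hea) av Dea.
  by have [tb hb] := from_tail_head Heb vb Deb.
- have [ta ha] := from_tail_head Hea va Dea.
  by have [tb hb] := from_tail_head (etrans (joins_sym _ _ _ _) Heb) bv Deb.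
Qed.

Lemma netdeg_G1 (D1 : option E -> bool) (x : V) :
  netdeg3 F1 ends1 D1 x =
  \sum_(e | interior e) flow ends1 D1 (Some e) x + flow ends1 D1 None x.
Proof.
rewrite netdeg3E /del2_add_eset (bigD1 None) /=; last by rewrite !inE eqxx orbT.
rewrite addrC; congr (_ + _).
transitivity (\sum_(o in Some @: [set e | interior e]) flow ends1 D1 o x).
  apply: eq_bigl => -[e|]; rewrite !inE /=; first by rewrite andbT orbF.
  by rewrite andbF; apply/esym/imsetP => -[].
rewrite big_imset /=; last by move=> p q _ _ [].
by apply: eq_bigl => e; rewrite inE.
Qed.

Lemma netdeg_G1_uv (D1 : option E -> bool) (x : V) :
  x \in [set u; v] -> netdeg3 F1 ends1 D1 x = 0.
Proof.
move=> xuv; rewrite netdeg_G1 big1 ?add0r => [|e /andP[e1 e2]].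
  by apply: flow_off; apply: contraTneq xuv => <-.
by apply: flow_off; apply: contraTneq xuv => <-.
Qed.

Lemma flow_glue_path (D1 : option E -> bool) (DR : E -> bool) (z : V) :
  flow ends (glue D1 DR) ea z + flow ends (glue D1 DR) eb z = flow ends1 D1 None z.
Proof.
have [ta ha tb hb] := glue_path D1 DR.
rewrite /flow ta ha tb hb /Defs.tail /Defs.head /=.
by case: (D1 None); rewrite ?subrKA // addrC subrKA.
Qed.

Lemma netdeg_glue (D1 : option E -> bool) (DR : E -> bool) (x : V) :
  netdeg3 [set: E] ends (glue D1 DR) x = netdeg3 F1 ends1 D1 x + spare_flow DR x.
Proof.
rewrite netdeg3E netdeg_G1 (eq_bigl predT) => [|e]; last by rewrite inE.
rewrite (bigID interior) /= -addrA; congr (_ + _).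
  by apply: eq_bigr => e ie; rewrite /flow /Defs.tail /Defs.head /glue ie.
have ea_ni : ~~ interior ea := not_interior Hea v_in_uv.
have eb_ni : ~~ interior eb && (eb != ea) by rewrite (not_interior Heb v_in_uv) eq_sym.
rewrite (bigD1 ea) //= (bigD1 eb) //= addrA flow_glue_path; congr (_ + _).
apply: eq_big => [e|e]; first by rewrite /spare andbA.
by case/andP=> /andP[ni nea] neb; apply/flow_ext/glue_spare; rewrite /spare ni nea.
Qed.

Hypothesis Hloop : loopless [set: E] ends.

(* If D1 makes G1 strongly connected and u has a spare out-arc and a spare
   in-arc, then glue makes G strongly connected: a reaches and is reached
   from every vertex. *)
Lemma glue_strong (D1 : option E -> bool) (DR : E -> bool) :
  strongly_connected W1 F1 ends1 D1 ->
  (exists2 e, spare e & Defs.tail ends DR e = u) ->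
  (exists2 e, spare e & Defs.head ends DR e = u) ->
  strongly_connected [set: V] [set: E] ends (glue D1 DR).
Proof.
move=> SC1 [e1 sp1 t1] [e2 sp2 h2].
set D := glue D1 DR; set reach := connect (darc [set: E] ends D).
have [ta ha tb hb] := glue_path D1 DR; rewrite -/D in ta ha tb hb.
have arc_a := arc_of_edge ends D ea; have arc_b := arc_of_edge ends D eb.
rewrite ta ha in arc_a; rewrite tb hb in arc_b.
have lift : forall x y, connect (darc F1 ends1 D1) x y -> reach x y.
  apply: connect_sub => x y /existsP[[e|] /andP[eF /andP[/eqP<- /eqP<-]]].
    have ie : interior e.
      by move: eF; rewrite !inE => /orP[/imsetP[e' + [->]]|//]; rewrite inE.
    apply: connect1; apply/existsP; exists e.
    by rewrite in_setT /Defs.tail /Defs.head /D /glue ie /= !eqxx.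
  rewrite /Defs.tail /Defs.head /=; case: (D1 None) arc_a arc_b => /= arc_a arc_b.
  - exact: connect_trans (connect1 arc_a) (connect1 arc_b).
  - exact: connect_trans (connect1 arc_b) (connect1 arc_a).
have aW : a \in W1 by rewrite /del2_vset in_setD Ha in_setT.
have bW : b \in W1 by rewrite /del2_vset in_setD Hb in_setT.
have hub z : z != u -> reach z a /\ reach a z.
  move=> zu; case zW: (z \in W1); first by split; apply/lift/SC1.
  have -> : z = v.
    by move: zW; rewrite /del2_vset !inE (negbTE zu) /= andbT => /negbFE/eqP.
  have ab := lift _ _ (SC1 a b aW bW); have ba := lift _ _ (SC1 b a bW aW).
  case: (D1 None) arc_a arc_b => /= arc_a arc_b.
  - by split; [apply: connect_trans (connect1 arc_b) ba | apply: connect1].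
  - by split; [apply: connect1 | apply: connect_trans ab (connect1 arc_b)].
have hub_u : reach u a /\ reach a u.
  have te1 : Defs.tail ends D e1 = u by rewrite /Defs.tail /D glue_spare.
  have he2 : Defs.head ends D e2 = u by rewrite /Defs.head /D glue_spare.
  have n1 : Defs.head ends D e1 != u by rewrite -te1 eq_sym tail_neq_head.
  have n2 : Defs.tail ends D e2 != u by rewrite -he2 tail_neq_head.
  have arc1 := arc_of_edge ends D e1; have arc2 := arc_of_edge ends D e2.
  rewrite te1 in arc1; rewrite he2 in arc2.
  split; first exact: connect_trans (connect1 arc1) (hub _ n1).1.
  exact: connect_trans (hub _ n2).2 (connect1 arc2).
have hub_all z : reach z a /\ reach a z.
  by have [->|zu] := eqVneq z u; [exact: hub_u | exact: hub].
by move=> x y _ _; apply: connect_trans (hub_all x).1 (hub_all y).2.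
Qed.

Lemma sum_split_uv (f : V -> 'Z_3) : \sum_x f x = f u + f v + \sum_(x in W1) f x.
Proof.
rewrite (bigD1 u) //= (bigD1 v) /=; last by rewrite eq_sym.
rewrite addrA; congr (_ + _); apply: eq_bigl => x.
by rewrite /del2_vset !inE negb_or andbT.
Qed.

Lemma glue_S3 (beta : V -> 'Z_3) (DR : E -> bool) :
  in_S3 W1 F1 ends1 -> \sum_(x in [set: V]) beta x = 0 ->
  spare_flow DR u = beta u -> spare_flow DR v = beta v ->
  (exists2 e, spare e & Defs.tail ends DR e = u) ->
  (exists2 e, spare e & Defs.head ends DR e = u) ->
  exists D, strongly_connected [set: V] [set: E] ends D /\
    forall x, x \in [set: V] -> netdeg3 [set: E] ends D x = beta x.
Proof.
move=> S3G1 sum_beta Hu Hv out_u in_u.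
pose beta1 x := beta x - spare_flow DR x.
have sum_beta1 : \sum_(x in W1) beta1 x = 0.
  have hand : \sum_x spare_flow DR x = 0.
    by rewrite exchange_big big1 // => e _; apply: sum_flow.
  have := sum_split_uv beta1; rewrite /beta1 sumrB hand subr0 Hu Hv !subrr !add0r => <-.
  by rewrite -[RHS]sum_beta; apply: eq_bigl => x; rewrite inE.
have [D1 [SC1 net1]] := S3G1 beta1 sum_beta1.
exists (glue D1 DR); split; first exact: glue_strong.
move=> x _; rewrite netdeg_glue; case xuv: (x \in [set u; v]).
  by rewrite netdeg_G1_uv // add0r; move: xuv; rewrite !inE => /orP[]/eqP->.
by rewrite net1 /beta1 ?subrK // /del2_vset in_setD xuv in_setT.
Qed.

Lemma glue_prescription (beta : V -> 'Z_3) (P : seq (E * V * V)) :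
  in_S3 W1 F1 ends1 -> \sum_(x in [set: V]) beta x = 0 ->
  prescription ends P -> all spare [seq p.1.1 | p <- P] ->
  \sum_(p <- P) arc_flow p.1.2 p.2 u = beta u - spare_rest [seq p.1.1 | p <- P] u ->
  \sum_(p <- P) arc_flow p.1.2 p.2 v = beta v - spare_rest [seq p.1.1 | p <- P] v ->
  has (fun p => p.1.2 == u) P -> has (fun p => p.2 == u) P ->
  exists D, strongly_connected [set: V] [set: E] ends D /\
    forall x, x \in [set: V] -> netdeg3 [set: E] ends D x = beta x.
Proof.
move=> S3G1 sum_beta presP spareP net_u net_v out_u in_u.
apply: (glue_S3 (DR := directs ends P)) => //.
- by rewrite /spare_flow sum_flow_directs // net_u subrKC.
- by rewrite /spare_flow sum_flow_directs // net_v subrKC.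
- exact: directs_has_tail.
- exact: directs_has_head.
Qed.

Lemma notin_uv (w : V) : w \notin [set u; v] -> u != w /\ v != w.
Proof. by rewrite !inE negb_or => /andP[uw vw]; split; rewrite eq_sym. Qed.

Hypothesis H4 : k_edge_connected 4 [set: V] [set: E] ends.

(* u has degree at least 4, so any list of fewer edges at u can be extended. *)
Lemma more_edges_at_u (s0 : seq E) (n : nat) :
  uniq s0 -> (size s0 + n <= 4)%N ->
  exists s, [/\ uniq (s0 ++ s), size s = n &
    {in s, forall g, exists2 w, joins ends g u w & u != w}].
Proof.
move=> U0 small.
have cut_u : (3 < #|cutset ends [set u]|)%N.
  by apply: (cutset_large (y := v) H4 (set11 u)); rewrite inE eq_sym.
have [s [Us size_s sub_s]] := extend_uniq U0 (leq_trans small cut_u).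
by exists s; split=> // g /sub_s/cutset1P.
Qed.

(* Case 1: u has a neighbour wh outside {u, v}.  We prescribe the edge uv,
   the edge u wh, two further edges at u and one further edge from v
   leaving {u, v}. *)
Lemma case_outer_neighbour (beta : V -> 'Z_3) (e0 h : E) (wh : V) :
  in_S3 W1 F1 ends1 -> \sum_(x in [set: V]) beta x = 0 ->
  (3 <= #|[set e | [exists w, (w \notin [set u; v]) && joins ends e v w]]|)%N ->
  joins ends e0 u v -> joins ends h u wh -> wh \notin [set u; v] ->
  exists D, strongly_connected [set: V] [set: E] ends D /\
    forall x, x \in [set: V] -> netdeg3 [set: E] ends D x = beta x.
Proof.
move=> S3G1 sum_beta H3 J0 Jh /notin_uv[uwh vwh].
have vu : v != u by rewrite eq_sym.
have U0 : uniq [:: e0; h].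
  by rewrite /= inE andbT; apply: joins_neq _ Jh vu vwh; rewrite joins_sym; exact: J0.
have [gs [Ug size_gs at_u]] := more_edges_at_u U0 (isT : size [:: e0; h] + 2 <= 4)%N.
have Uab : uniq [:: ea; eb] by rewrite /= inE Heab.
have [fs [Uf size_fs sub_f]] := extend_uniq Uab (H3 : (size [:: ea; eb] + 1 <= _)%N).
case: gs size_gs Ug at_u => [|g1 [|g2 [|]]] // _ Ug at_u.
case: fs size_fs Uf sub_f => [|f0 [|]] // _ Uf sub_f.
have [w1 Jg1 uw1] := at_u g1 (mem_head _ _).
have [w2 Jg2 uw2] := at_u g2 (mem_last g1 [:: g2]).
have /[!inE]/existsP[wf /andP[/notin_uv[uwf vwf] Jf0]] := sub_f f0 (mem_head _ _).
move: Uf; rewrite /= !inE !negb_or andbT !(eq_sym _ f0) => /andP[/andP[_ f0ea] f0eb].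
have f0_off_u e w : joins ends e u w -> f0 != e.
  by move=> J; rewrite eq_sym; apply: joins_neq J Jf0 Huv uwf.
set L := [:: e0; h; g1; g2; f0].
have [s0 [sh [t1 [t2 [s1 [net_u net_v out_u in_u]]]]]] :=
  signs_one_outer (v == w1) (v == w2) (beta u - spare_rest L u) (beta v - spare_rest L v).
set P := [:: dir s0 e0 u v; dir sh h u wh; dir t1 g1 u w1; dir t2 g2 u w2; dir s1 f0 v wf].
have keysP : [seq p.1.1 | p <- P] = L by [].
apply: (glue_prescription (P := P)); rewrite ?keysP //.
- rewrite /prescription keysP (_ : L = [:: e0; h; g1; g2] ++ [:: f0]) //.
  rewrite cat_uniq Ug /= !inE !negb_or (f0_off_u _ _ J0) (f0_off_u _ _ Jh).
  by rewrite (f0_off_u _ _ Jg1) (f0_off_u _ _ Jg2) !dir_proper.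
- rewrite /= (spare_at_u J0) (spare_at_u Jh) (spare_at_u Jg1) (spare_at_u Jg2).
  by rewrite (spare_touching Jf0 v_in_uv).
- rewrite -net_u !big_cons big_nil /= (dir_flow s0 _ Huv) (dir_flow sh _ uwh).
  rewrite (dir_flow t1 _ uw1) (dir_flow t2 _ uw2) (dir_flow s1 _ vwf) eqxx.
  by rewrite (negbTE Huv) (negbTE uwf) !addr0 !addrA.
- rewrite -net_v !big_cons big_nil /= (dir_flow s0 _ Huv) (dir_flow sh _ uwh).
  rewrite (dir_flow t1 _ uw1) (dir_flow t2 _ uw2) (dir_flow s1 _ vwf) eqxx.
  by rewrite (negbTE vu) (negbTE vwh) !addr0 !add0r !addrA.
- rewrite /= (dir_tail s0 Huv) (dir_tail sh uwh) (dir_tail t1 uw1) (dir_tail t2 uw2).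
  by case/or4P: out_u => ->; rewrite ?orbT.
- rewrite /= (dir_head s0 Huv) (dir_head sh uwh) (dir_head t1 uw1) (dir_head t2 uw2).
  by case/or4P: in_u => ->; rewrite ?orbT.
Qed.

(* Case 2: every edge at u goes to v.  Then u has four edges to v, and the
   cut around {u, v} has two edges besides va and vb, both leaving v. *)
Lemma case_no_outer_neighbour (beta : V -> 'Z_3) :
  in_S3 W1 F1 ends1 -> \sum_(x in [set: V]) beta x = 0 ->
  (forall e w, joins ends e u w -> w \in [set u; v]) ->
  exists D, strongly_connected [set: V] [set: E] ends D /\
    forall x, x \in [set: V] -> netdeg3 [set: E] ends D x = beta x.
Proof.
move=> S3G1 sum_beta no_outer.
have vu : v != u by rewrite eq_sym.
have [gs [Ugs size_gs to_v]] : exists gs, [/\ uniq gs, size gs = 4 &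
    {in gs, forall g, joins ends g u v}].
  have [gs [Ugs size_gs at_u]] := more_edges_at_u (isT : uniq (@nil E)) (isT : 0 + 4 <= 4)%N.
  exists gs; split=> // g /at_u[w J uw]; move: (no_outer _ _ J).
  by rewrite !inE (eq_sym w) (negbTE uw) => /eqP wv; rewrite -wv.
have [fs [Ufs size_fs from_v]] : exists fs, [/\ uniq ([:: ea; eb] ++ fs), size fs = 2 &
    {in fs, forall f, exists2 w, joins ends f v w & w \notin [set u; v]}].
  have cut_uv : (3 < #|cutset ends [set u; v]|)%N.
    by apply: (cutset_large H4 (_ : u \in _) Ha); rewrite !inE eqxx.
  have Uab : uniq [:: ea; eb] by rewrite /= inE Heab.
  have [fs [Ufs size_fs sub_f]] := extend_uniq Uab (cut_uv : (size [:: ea; eb] + 2 <= _)%N).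
  exists fs; split=> // f /sub_f/cutsetP[x [w [J xuv wuv]]]; exists w => //.
  move: xuv; rewrite !inE => /orP[/eqP xu|/eqP <- //].
  by subst x; move: (no_outer _ _ J); rewrite (negbTE wuv).
have UL : uniq (gs ++ fs).
  rewrite cat_uniq Ugs; move: Ufs; rewrite cat_uniq => /and3P[_ _ ->]; rewrite andbT.
  apply/hasPn => f /from_v[w Jf /notin_uv[uw _]]; apply/negP => /to_v Jg.
  by have := joins_neq Jg Jf Huv uw; rewrite eqxx.
have spareL : all spare (gs ++ fs).
  rewrite all_cat; apply/andP; split; apply/allP => e eL.
    exact: (spare_at_u (to_v e eL)).
  have [w Je _] := from_v e eL.
  move: Ufs; rewrite cat_uniq => /and3P[_ /hasPn/(_ e eL)]; rewrite !inE negb_or.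
  by case/andP=> eae ebe _; apply: (spare_touching Je v_in_uv).
case: gs size_gs Ugs to_v UL spareL => [|g0 [|g1 [|g2 [|g3 [|]]]]] // _ _ to_v.
case: fs size_fs Ufs from_v => [|f0 [|f1 [|]]] // _ _ from_v UL spareL.
have [Jg0 Jg1 Jg2 Jg3] : [/\ joins ends g0 u v, joins ends g1 u v,
  joins ends g2 u v & joins ends g3 u v] by split; apply: to_v; rewrite !inE eqxx ?orbT.
have [w0 Jf0 /notin_uv[uw0 vw0]] := from_v f0 (mem_head _ _).
have [w1 Jf1 /notin_uv[uw1 vw1]] := from_v f1 (mem_last f0 [:: f1]).
set L := [:: g0; g1; g2; g3] ++ [:: f0; f1].
have [t0 [t1 [t2 [t3 [s0 [s1 [net_u net_v out_u in_u]]]]]]] :=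
  signs_no_outer (beta u - spare_rest L u) (beta v - spare_rest L v).
set P := [:: dir t0 g0 u v; dir t1 g1 u v; dir t2 g2 u v; dir t3 g3 u v;
             dir s0 f0 v w0; dir s1 f1 v w1].
have keysP : [seq p.1.1 | p <- P] = L by [].
apply: (glue_prescription (P := P)); rewrite ?keysP //.
- by rewrite /prescription keysP UL /= !dir_proper.
- rewrite -net_u !big_cons big_nil /= !(dir_flow _ _ Huv) (dir_flow s0 _ vw0).
  rewrite (dir_flow s1 _ vw1) eqxx (negbTE Huv) (negbTE uw0) (negbTE uw1).
  by rewrite !addr0 !addrA.
- rewrite -net_v !big_cons big_nil /= !(dir_flow _ _ Huv) (dir_flow s0 _ vw0).
  by rewrite (dir_flow s1 _ vw1) eqxx (negbTE vu) !addr0 !addrA.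
- by rewrite /= !(dir_tail _ Huv); case/or4P: out_u => ->; rewrite ?orbT.
- by rewrite /= !(dir_head _ Huv); case/or4P: in_u => ->; rewrite ?orbT.
Qed.

End Gluing.

Local Close Scope ring_scope.
Unset Implicit Arguments.
Set Strict Implicit.
Set Printing Implicit Defensive.

Theorem mainTheorem10 (V E : finType) (ends : E -> V * V)
  (Hloop : loopless [set: E] ends)
  (H4 : k_edge_connected 4 [set: V] [set: E] ends)
  (u v : V) (Huv : u != v) (Hadj : exists e : E, joins ends e u v)
  (H3 : 3 <= #|[set e : E | [exists w, (w \notin [set u; v]) && joins ends e v w]]|)
  (ea eb : E) (a b : V) (Heab : ea != eb) (Hab : a != b)
  (Ha : a \notin [set u; v]) (Hb : b \notin [set u; v])
  (Hea : joins ends ea v a) (Heb : joins ends eb v b) :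
  in_S3 (del2_vset u v) (del2_add_eset ends u v) (del2_add_ends ends a b) ->
  in_S3 [set: V] [set: E] ends.
Proof.
move=> S3G1 beta sum_beta.
case: (boolP [exists h, [exists w, (w \notin [set u; v]) && joins ends h u w]]).
  case/existsP=> h /existsP[wh /andP[whuv Jh]]; have [e0 J0] := Hadj.
  exact: (case_outer_neighbour Huv Heab Ha Hb Hea Heb Hloop H4 S3G1 sum_beta H3 J0 Jh whuv).
move=> no_outer; apply: (case_no_outer_neighbour Huv Heab Ha Hb Hea Heb Hloop H4 S3G1 sum_beta).
move=> e w J; apply: contraT => w_out; move: no_outer; rewrite negb_exists => /forallP/(_ e).
by rewrite negb_exists => /forallP/(_ w); rewrite w_out J.
Qed.
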